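(* For every integer $\alpha\ge2$ and every integer $k>3$, $$2k^2-2k\le N_\alpha(k,k)\le (k^3-k^2+k)\binom{k}{2}.$$
   Context: A $k$-power is a word $u^k$ ($k$ concatenated copies of $u$) for a nonempty word $u$. A $k$-anti-power is a word $w=w_1\cdots w_k$ with $|w_1|=\cdots=|w_k|$ and $w_1,\dots,w_k$ pairwise distinct. $N_\alpha(k,k)$ is the smallest positive integer $N$ such that every word of length $N$ over an alphabet of size $\alpha$ contains a factor (contiguous subword) that is a $k$-power or a $k$-anti-power. *)

From mathcomp Require Import all_boot.
Set Implicit Arguments. Unset Strict Implicit. Unset Printing Implicit Defensive.

Definition is_kpower (T : eqType) (k : nat) (w : seq T) : Prop :=
  exists u : seq T, u != [::] /\ w = flatten (nseq k u).

Definition is_kantipower (T : eqType) (k : nat) (w : seq T) : Prop :=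
  exists ws : seq (seq T),
    [/\ size ws = k, w = flatten ws,
        (exists m, forall b, b \in ws -> size b = m) & uniq ws].

Definition forces_power_or_antipower (alpha k N : nat) : Prop :=
  forall w : seq 'I_alpha, size w = N ->
    exists f : seq 'I_alpha, infix f w /\ (is_kpower k f \/ is_kantipower k f).

Definition is_N_alpha_kk (alpha k N : nat) : Prop :=
  0 < N /\ forces_power_or_antipower alpha k N /\
  (forall M, 0 < M -> M < N -> ~ forces_power_or_antipower alpha k M).

From mathcomp Require Import all_boot zify.
From Stdlib Require Import Classical.
From Stdlib Require Wf_nat.
Set Implicit Arguments. Unset Strict Implicit. Unset Printing Implicit Defensive.

(* Upper bound: if w has no k-power and no k-anti-power factor, then for every block
   length m the first k blocks of length m of w contain two equal blocks, say blocks i < j.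
   Let m range over the C(k,2) + 1 lengths starting at (k^2 - k) C(k,2); two lengths
   m < m + d yield the same pair (i, j), and the two coincidences combine into a k-power of
   period (j - i) d starting at i (m + d), which fits in w when |w| >= (k^3 - k^2 + k) C(k,2).

   Lower bound: in the binary word (1 0^(k-1))^(k-2) (1 0^(k-2))^2 (1 0^(k-1))^(k-2) 1,
   of length 2k^2 - 2k - 1, the ones are the positions x with k | x + s(x), where the phase
   shift s is 0 before the center c = k(k-1) - 1, 1 at c and 2 after it.  A k-power would
   give k ones in arithmetic progression; as s is nondecreasing and at most 2, all of them
   would have the same phase, i.e. lie on one side of c, which leaves too little room.
   For a k-anti-power with blocks of length m, two blocks coincide: by pigeonhole on the
   position of their only one if m <= k - 2, next to the central block if m = k - 1, and
   for m >= k because the phases t (m - k) + 2 [t > t0] mod k of the blocks t other than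
   the central one t0 cannot be pairwise distinct. *)

Lemma pigeonhole (T : eqType) (B : seq T) n (f : nat -> T) :
  size B < n -> (forall t, t < n -> f t \in B) ->
  exists t t', [/\ t < t', t' < n & f t = f t'].
Proof.
move=> ltBn fB; have /uniqPn : ~~ uniq (map f (iota 0 n)).
  apply: contraTN ltBn => uniq_f; rewrite -leqNgt -{1}(size_iota 0 n) -(size_map f).
  by apply: uniq_leq_size => // y /mapP[t]; rewrite mem_iota add0n => /andP[_ /fB ?] ->.
move=> /(_ (f 0)) [t [t' [ltt' lt't eq_f]]]; rewrite size_map size_iota in lt't.
exists t, t'; split=> //.
by move: eq_f; rewrite !(nth_map 0) ?size_iota ?(ltn_trans ltt') // !nth_iota ?(ltn_trans ltt').
Qed.

Lemma periodic_mod (T : Type) (u : nat -> T) p n :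
  (forall i, i + p < n -> u i = u (i + p)) -> forall i, i < n -> u i = u (i %% p).
Proof.
move=> per; elim/ltn_ind=> i IH lt_in; case: (ltnP i p) => [lt_ip | le_pi].
  by rewrite modn_small.
have [p0 | p_gt0] := posnP p; first by rewrite p0 modn0.
rewrite -(subnK le_pi) modnDr -per; last by rewrite subnK.
by apply: IH; lia.
Qed.

Lemma infix_nth (T : eqType) (x0 : T) (f w : seq T) : infix f w ->
  exists2 a, a + size f <= size w & forall i, i < size f -> nth x0 f i = nth x0 w (a + i).
Proof.
move=> /infixP[s [s' ->]]; exists (size s); first by rewrite !size_cat addnA leq_addr.
by move=> i lt_if; rewrite nth_cat ltnNge leq_addr addKn /= nth_cat lt_if.
Qed.

Lemma nth_flatten_nseq (T : eqType) (x0 : T) (u : seq T) k i : i < k * size u ->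
  nth x0 (flatten (nseq k u)) i = nth x0 u (i %% size u).
Proof.
elim: k i => [|k IH] i; first by rewrite mul0n.
rewrite /= nth_cat mulSn => lt_i; case: ltnP => [lt_iu | le_ui]; first by rewrite modn_small.
rewrite IH; last by rewrite -(ltn_add2l (size u)) subnKC.
by rewrite -{2}(subnK le_ui) modnDr.
Qed.

Lemma kpowerP (T : eqType) (x0 : T) k (s : seq T) : 0 < k ->
  is_kpower k s <-> exists2 p, 0 < p &
    size s = k * p /\ forall i, i + p < size s -> nth x0 s i = nth x0 s (i + p).
Proof.
move=> k_gt0; split=> [[u [u_nil ->]] | [p p_gt0 [size_s per]]].
  have size_s : size (flatten (nseq k u)) = k * size u.
    by rewrite size_flatten /shape map_nseq sumn_nseq mulnC.
  exists (size u); first by rewrite lt0n size_eq0.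
  split=> // i; rewrite size_s => lt_i.
  by rewrite !nth_flatten_nseq ?modnDr // (leq_trans _ lt_i) // ltnS leq_addr.
have size_u : size (take p s) = p.
  by rewrite size_takel // size_s leq_pmull.
exists (take p s); split; first by rewrite -size_eq0 size_u -lt0n.
apply: (@eq_from_nth _ x0) => [|i lt_i].
  by rewrite size_flatten /shape map_nseq sumn_nseq size_u mulnC.
by rewrite nth_flatten_nseq size_u -?size_s // nth_take ?ltn_pmod // (periodic_mod per).
Qed.

Lemma nth_reshape_nseq (T : Type) k m (s : seq T) t : t < k ->
  nth [::] (reshape (nseq k m) s) t = take m (drop (t * m) s).
Proof.
by move=> lt_tk; rewrite nth_reshape nth_nseq lt_tk take_nseq ?(ltnW lt_tk) // sumn_nseq mulnC.
Qed.

Lemma kantipowerP (T : eqType) k (s : seq T) :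
  is_kantipower k s <-> exists m, size s = k * m /\ uniq (reshape (nseq k m) s).
Proof.
split=> [[ws [size_ws -> [m size_b] uniq_ws]] | [m [size_s uniq_ws]]].
  have shape_ws : shape ws = nseq k m.
    apply: (@eq_from_nth _ 0) => [|i]; rewrite size_map ?size_nseq // => lt_i.
    by rewrite nth_nseq -size_ws lt_i (nth_map [::]) // size_b // mem_nth.
  by exists m; rewrite -shape_ws flattenK size_flatten shape_ws sumn_nseq mulnC.
exists (reshape (nseq k m) s); split; rewrite ?size_reshape ?size_nseq //.
- by rewrite reshapeKr // sumn_nseq size_s mulnC.
- exists m => b; have: shape (reshape (nseq k m) s) = nseq k m.
    by rewrite reshapeKl // sumn_nseq size_s mulnC.
  by move=> shape_ws /(map_f size); rewrite -[map _ _]/(shape _) shape_ws => /nseqP[].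
Qed.

Lemma take_drop_eq_nth (T : eqType) (x0 : T) (s : seq T) m a b :
  take m (drop a s) = take m (drop b s) ->
  forall i, i < m -> nth x0 s (a + i) = nth x0 s (b + i).
Proof. by move=> eq_ab i lt_im; rewrite -!nth_drop -(nth_take _ lt_im) eq_ab nth_take. Qed.

Lemma take_drop_eqP (T : eqType) (x0 : T) (s : seq T) m a b :
  a + m <= size s -> b + m <= size s ->
  reflect (forall i, i < m -> nth x0 s (a + i) = nth x0 s (b + i))
          (take m (drop a s) == take m (drop b s)).
Proof.
move=> le_as le_bs; apply: (iffP eqP) => [/(take_drop_eq_nth x0) // | eq_ab].
have size_blk c : c + m <= size s -> size (take m (drop c s)) = m.
  by move=> le_cs; rewrite size_takel // size_drop leq_subRL // (leq_trans (leq_addr _ _) le_cs).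
apply: (@eq_from_nth _ x0) => [|i]; rewrite !size_blk // => lt_im.
by rewrite !nth_take // !nth_drop eq_ab.
Qed.

Lemma kpower_factor_periodic (T : eqType) (x0 : T) k (f w : seq T) :
  0 < k -> infix f w -> is_kpower k f ->
  exists a p, [/\ 0 < p, a + k * p <= size w &
    forall i, i + p < k * p -> nth x0 w (a + i) = nth x0 w (a + i + p)].
Proof.
move=> k_gt0 /(infix_nth x0)[a le_aw nth_f] /(kpowerP x0 _ k_gt0)[p p_gt0 [size_f per]].
exists a, p; rewrite -size_f; split=> // i lt_i.
have lt_if : i < size f by rewrite (leq_trans _ lt_i) // ltnS leq_addr.
by rewrite -addnA -!nth_f // per.
Qed.

Lemma kantipower_factor_blocks (T : eqType) (x0 : T) k (f w : seq T) :
  infix f w -> is_kantipower k f ->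
  exists a m, a + k * m <= size w /\ forall t t', t < t' < k ->
    ~ (forall i, i < m -> nth x0 w (a + t * m + i) = nth x0 w (a + t' * m + i)).
Proof.
move=> /(infix_nth x0)[a le_aw nth_f] /kantipowerP[m [size_f uniq_ws]].
exists a, m; split; rewrite -?size_f // => t t' /andP[lt_tt' lt_t'k] eq_blocks.
have lt_tk := ltn_trans lt_tt' lt_t'k.
have le_blk c : c < k -> c * m + m <= size f.
  by move=> lt_ck; rewrite size_f addnC -mulSn leq_mul2r lt_ck orbT.
have := nth_uniq [::] _ _ uniq_ws; rewrite size_reshape size_nseq => /(_ t t' lt_tk lt_t'k).
rewrite !nth_reshape_nseq // (ltn_eqF lt_tt') => /negbT/negP; apply.
apply/(take_drop_eqP x0 (le_blk _ lt_tk) (le_blk _ lt_t'k)) => i lt_im.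
have lt_f c : c < k -> c * m + i < size f.
  by move=> /le_blk; apply: leq_trans; rewrite ltn_add2l.
by rewrite !nth_f ?lt_f // !addnA eq_blocks.
Qed.

Lemma repeated_block_pair_periodic (T : Type) (u : nat -> T) k i j m d :
  i < j -> (i + k * (j - i)) * d <= m ->
  (forall e, e < m -> u (i * m + e) = u (j * m + e)) ->
  (forall e, e < m + d -> u (i * (m + d) + e) = u (j * (m + d) + e)) ->
  forall e, e + (j - i) * d < k * ((j - i) * d) ->
    u (i * (m + d) + e) = u (i * (m + d) + e + (j - i) * d).
Proof.
move=> lt_ij; set p := (j - i) * d => le_m eq_m eq_md e lt_e.
have le_m' : i * d + k * p <= m by rewrite /p mulnA -mulnDl.
have jd : j * d = i * d + p by rewrite /p -mulnDl subnKC // ltnW.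
have lt_ekp : e < k * p by rewrite (leq_trans _ lt_e) // ltnS leq_addr.
rewrite eq_md; last by rewrite (leq_trans _ (leq_addr _ _)) // (leq_trans _ le_m') // ltn_addl.
have -> : j * (m + d) + e = j * m + (i * d + p + e) by rewrite mulnDr jd !addnA.
have -> : i * (m + d) + e + p = i * m + (i * d + p + e) by rewrite mulnDr; lia.
by rewrite eq_m //; lia.
Qed.

Lemma set2_ltn_inj n (i j i' j' : 'I_n) :
  i < j -> i' < j' -> [set i; j] = [set i'; j'] -> i = i' /\ j = j'.
Proof.
move=> lt_ij lt_ij' eq_ij.
have : i \in [set i'; j'] by rewrite -eq_ij set21.
have : j \in [set i'; j'] by rewrite -eq_ij set22.
have : i' \in [set i; j] by rewrite eq_ij set21.
rewrite !inE => /orP[]/eqP e1 /orP[]/eqP e2 /orP[]/eqP e3; subst=> //;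
  by move: lt_ij lt_ij'; rewrite ?ltnn //; lia.
Qed.

Section UpperBound.

Variables (T : eqType) (k : nat) (w : seq T).
Hypothesis k_gt1 : 1 < k.
Hypothesis w_free : forall f, infix f w -> ~ (is_kpower k f \/ is_kantipower k f).

Lemma free_repeated_block m : k * m <= size w ->
  exists i j : 'I_k, i < j /\ take m (drop (i * m) w) = take m (drop (j * m) w).
Proof.
move=> le_w; set f := take (k * m) w.
have /(uniqPn [::])[i [j [lt_ij lt_jk]]] : ~~ uniq (reshape (nseq k m) f).
  apply/negP => uniq_ws; apply: (w_free (infix_take w (k * m))); right.
  by apply/kantipowerP; exists m; rewrite size_takel.
rewrite size_reshape size_nseq in lt_jk; have lt_ik := ltn_trans lt_ij lt_jk.
have blk c : c < k -> take m (drop (c * m) f) = take m (drop (c * m) w).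
  by move=> lt_ck; rewrite !take_drop take_takel // -mulSn leq_mul2r lt_ck orbT.
by rewrite !nth_reshape_nseq // !blk // => eq_ij; exists (Ordinal lt_ik), (Ordinal lt_jk).
Qed.

Lemma free_not_periodic (x0 : T) a p : 0 < p -> a + k * p <= size w ->
  ~ (forall i, i + p < k * p -> nth x0 w (a + i) = nth x0 w (a + i + p)).
Proof.
move=> p_gt0 le_w per; set f := take (k * p) (drop a w).
have size_f : size f = k * p.
  by rewrite size_takel // size_drop leq_subRL // (leq_trans _ le_w) ?leq_addr.
apply: (w_free (infix_trans (infix_take _ (k * p)) (infix_drop w a))); left.
apply/(kpowerP x0 _ (ltnW k_gt1)); exists p => //; split=> // i; rewrite size_f => lt_i.
have lt_ikp : i < k * p by rewrite (leq_trans _ lt_i) // ltnS leq_addr.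
by rewrite !nth_take // !nth_drop addnA per.
Qed.

Lemma free_repeated_pair A : k * (A + 'C(k, 2)) <= size w ->
  exists (i j : 'I_k) x x', [/\ i < j, x < x' <= 'C(k, 2),
    take (A + x) (drop (i * (A + x)) w) = take (A + x) (drop (j * (A + x)) w) &
    take (A + x') (drop (i * (A + x')) w) = take (A + x') (drop (j * (A + x')) w)].
Proof.
move=> le_w; set b := 'C(k, 2).
pose pair_at m := [pick ij : 'I_k * 'I_k | (ij.1 < ij.2) &&
  (take m (drop (ij.1 * m) w) == take m (drop (ij.2 * m) w))].
pose F x := if pair_at (A + x) is Some ij then [set ij.1; ij.2] else set0.
have pair_atP x : x <= b -> exists i j : 'I_k, [/\ i < j, F x = [set i; j] &
    take (A + x) (drop (i * (A + x)) w) = take (A + x) (drop (j * (A + x)) w)].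
  move=> le_xb; rewrite /F /pair_at; case: pickP => [[i j] /andP[lt_ij /eqP eq_ij] | none].
    by exists i, j.
  have [|i [j [lt_ij eq_ij]]] := free_repeated_block (m := A + x).
    by rewrite (leq_trans _ le_w) // leq_mul2l leq_add2l le_xb orbT.
  by have := none (i, j); rewrite /= lt_ij eq_ij eqxx.
have [x [x' [lt_xx' lt_x'b eqF]]] : exists x x', [/\ x < x', x' < b.+1 & F x = F x'].
  apply: (@pigeonhole _ (enum [set S : {set 'I_k} | #|S| == 2])).
    by rewrite -cardE card_draws card_ord.
  move=> x lt_xb; have [i [j [lt_ij -> _]]] := pair_atP x lt_xb.
  by rewrite mem_enum inE cards2 -val_eqE (ltn_eqF lt_ij).
have [i [j [lt_ij Fx eq_x]]] := pair_atP x (ltnW (leq_ltn_trans lt_xx' lt_x'b)).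
have [i' [j' [lt_ij' Fx' eq_x']]] := pair_atP x' lt_x'b.
have [ii' jj'] := set2_ltn_inj lt_ij lt_ij' (etrans (esym Fx) (etrans eqF Fx')).
subst i' j'.
by exists i, j, x, x'; rewrite lt_xx'.
Qed.

Lemma free_size_lt : size w < (k ^ 3 - k ^ 2 + k) * 'C(k, 2).
Proof.
rewrite ltnNge; apply/negP => le_w; set b := 'C(k, 2).
set A := k * (k - 1) * b.
have b_gt0 : 0 < b by rewrite bin_gt0.
have le_Ab : k * (A + b) <= size w.
  by rewrite (leq_trans _ le_w) // /A !expnS expn0; nia.
have [x0 _] : exists x0 : T, True.
  by case: w le_Ab => [|x0 w']; [rewrite leqn0 muln_eq0 addn_eq0; lia | exists x0].
have [i [j [x [x' [lt_ij /andP[lt_xx' le_x'b] eq_x eq_x']]]]] := free_repeated_pair le_Ab.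
have le_ij : (i + k * (j - i)) * (x' - x) <= A + x.
  rewrite (leq_trans _ (leq_addr _ _)) // /A leq_mul //; last by lia.
  have lt_jk := ltn_ord j; nia.
apply: (@free_not_periodic x0 (i * (A + x')) ((j - i) * (x' - x))).
- by rewrite muln_gt0 !subn_gt0 lt_ij lt_xx'.
- set d := x' - x; have -> : x' = x + d by rewrite subnKC // ltnW.
  have le_jk : j <= k by apply: ltnW.
  have le_xb : x <= b by apply: leq_trans (ltnW lt_xx') le_x'b.
  have : j * (A + x) <= k * (A + b) by apply: leq_mul; rewrite ?leq_add2l.
  have : i.+1 * (A + x) <= j * (A + x) by rewrite leq_mul2r lt_ij orbT.
  have : i * d + k * ((j - i) * d) <= A + x by rewrite mulnA -mulnDl.
  rewrite addnA mulnDr -addnA mulSn; lia.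
- have ex' : A + x' = (A + x) + (x' - x) by rewrite -addnA subnKC // ltnW.
  rewrite ex' in eq_x' *; apply: repeated_block_pair_periodic => //.
  + exact: (take_drop_eq_nth x0 eq_x).
  + exact: (take_drop_eq_nth x0 eq_x').
Qed.

End UpperBound.

(* Blocks of length k + g of the lower-bound word: block t is in phase t * g, plus 2 once it
   is past the central block t0. *)
Definition shifted_residue_clash k g t0 :=
  exists t t', [/\ t < t', t' < k, t != t0, t' != t0 &
    t * g + 2 * (t0 < t) = t' * g + 2 * (t0 < t') %[mod k]].

Lemma shifted_residue_clash_period k g t0 r : t0 < k -> 0 < r -> k %| r * g ->
  (r < t0) || (t0.+1 + r < k) -> shifted_residue_clash k g t0.
Proof.
move=> lt_t0k r_gt0 /eqP rg /orP[lt_rt0 | lt_k].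
  exists 0, r; rewrite r_gt0 !(ltnNge t0) (ltnW lt_rt0) ?leq0n /=.
  by split; [| lia | lia | lia | rewrite /= !muln0 !addn0 mul0n mod0n rg].
exists t0.+1, (t0.+1 + r); rewrite !(ltn_addr _ (ltnSn t0)) ltnSn.
split; [lia | lia | lia | lia |].
by rewrite [in RHS]mulnDl [in RHS]addnAC -[in RHS]modnDmr rg addn0.
Qed.

Lemma shifted_residue_clash_coprime k g t0 : coprime g k -> 3 < k -> g + 3 <= k ->
  0 < t0 -> t0 + 2 <= k -> shifted_residue_clash k g t0.
Proof.
move=> co_gk k_gt3 le_gk t0_gt0 le_t0k; have k_gt0 : 0 < k by lia.
have [a _] := Bezoutl g k_gt0; rewrite gcdnC (eqP co_gk) => dvd_a.
set b := (2 * a) %% k.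
have dvd_b : k %| b * g + 2.
  move: (dvdn_mull 2 dvd_a); rewrite mulnDr muln1 mulnA addnC /dvdn => /eqP dvd2.
  by rewrite /dvdn /b -modnDml modnMml modnDml dvd2.
have b_ge2 : 1 < b.
  case: (leqP b 1) => // le_b1.
  have le_k : k <= b * g + 2 by apply: dvdn_leq dvd_b; rewrite addn2.
  by have := leq_mul le_b1 (leqnn g); rewrite mul1n; lia.
have lt_bk : b < k by apply: ltn_pmod.
case: (leqP b t0.+1) => [le_bt0 | lt_t0b].
  exists (t0.+1 - b), t0.+1.
  rewrite ltnSn (ltnNge t0 (t0.+1 - b)) (_ : t0.+1 - b <= t0) /=; last by lia.
  split; [lia | lia | lia | lia |].
  rewrite muln0 addn0 muln1 -{2}(subnK le_bt0) mulnDl -addnA.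
  by rewrite -[in RHS]modnDmr (eqP dvd_b) addn0.
exists 0, b; rewrite (ltnW lt_t0b) /=.
by split; [lia | lia | lia | lia | rewrite muln1 mod0n (eqP dvd_b)].
Qed.

Lemma shifted_residue_clash_even k g t0 : 2 %| k -> 2 %| g -> 3 < k -> t0 < k ->
  shifted_residue_clash k g t0.
Proof.
move=> ev_k ev_g k_gt3 lt_t0k; have k_gt0 : 0 < k by lia.
pose h u := u * g + 2 * (t0 < u).
pose skip t := if t < t0 then t else t.+1.
have ev_h u : 2 %| h u %% k.
  rewrite /dvdn modn_dvdm // -/(dvdn _ _).
  by apply: dvdn_add; [apply: dvdn_mull | apply: dvdn_mulr].
have [t [t' [lt_tt' lt_t'k eq_half]]] : exists t t',
    [/\ t < t', t' < k.-1 & h (skip t) %% k %/ 2 = h (skip t') %% k %/ 2].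
  apply: (@pigeonhole _ (iota 0 (k %/ 2))); first by rewrite size_iota; lia.
  move=> t _; rewrite mem_iota /=.
  by have := ltn_pmod (h (skip t)) k_gt0; have := ev_h (skip t); lia.
exists (skip t), (skip t'); split; last first.
  by rewrite -[LHS](divnK (ev_h _)) -[RHS](divnK (ev_h _)) eq_half.
all: by rewrite /skip; do ?case: ifP; lia.
Qed.

Lemma shifted_residue_clash_exists k g t0 : 3 < k -> g + 3 <= k -> 0 < t0 -> t0 + 2 <= k ->
  shifted_residue_clash k g t0.
Proof.
move=> k_gt3 le_gk t0_gt0 le_t0k; have k_gt0 : 0 < k by lia.
set d := gcdn g k; have [le_d1 | d_gt1] := leqP d 1.
  apply: shifted_residue_clash_coprime => //.
  by rewrite /coprime eqn_leq le_d1 gcdn_gt0 k_gt0 orbT.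
set r := k %/ d; have k_rd : k = r * d by rewrite divnK // dvdn_gcdr.
have r_gt0 : 0 < r by move: k_gt0; rewrite k_rd muln_gt0 => /andP[].
have dvd_rg : k %| r * g by rewrite mulnC /r muln_divCA_gcd dvdn_mulr.
have [same_side | ] := boolP ((r < t0) || (t0.+1 + r < k)).
  by apply: (shifted_residue_clash_period _ r_gt0 dvd_rg) => //; lia.
rewrite negb_or -!leqNgt => /andP[le_t0r le_kr].
have d2 : d = 2.
  apply/eqP; rewrite eqn_leq d_gt1 andbT leqNgt; apply/negP => d_gt2.
  by have := leq_mul (leqnn r) d_gt2; rewrite -k_rd; lia.
by apply: shifted_residue_clash_even; rewrite -?d2 ?dvdn_gcdl ?dvdn_gcdr //; lia.
Qed.

Lemma exists_dvdn_add k n : 0 < k -> exists2 e, e < k & k %| n + e.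
Proof.
move=> k_gt0; exists ((k - n %% k) %% k); first exact: ltn_pmod.
by rewrite /dvdn modnDmr -modnDml subnKC ?modnn // ltnW // ltn_pmod.
Qed.

Lemma dvdn_add_ltE k y i : i < k -> (k %| y + i) = (i == (k - y %% k) %% k).
Proof.
move=> lt_ik; have k_gt0 : 0 < k by apply: leq_ltn_trans lt_ik.
rewrite /dvdn -modnDml; have := ltn_pmod y k_gt0; move: (y %% k) => [|r] lt_rk.
  by rewrite add0n subn0 modnn !modn_small.
rewrite (modn_small (_ : k - r.+1 < k)); last by rewrite ltn_subrL.
case: (ltnP (r.+1 + i) k) => [lt_k | le_k]; first by rewrite modn_small //; apply/eqP/eqP; lia.
rewrite -(subnK le_k) modnDr modn_small; last by lia.
by apply/eqP/eqP; lia.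
Qed.

Lemma dvdn_window k q n : q * k < n + k -> n < q * k + k -> (k %| n) = (n == q * k).
Proof.
move=> lo hi; apply/idP/eqP => [/dvdnP[j def_n] | ->]; last exact: dvdn_mull.
move: lo hi; rewrite def_n -!mulSnr !ltn_mul2r => /andP[k_gt0 lt_qj] /andP[_ lt_jq].
by congr (_ * _); lia.
Qed.

Definition center k := k * (k - 1) - 1.

Definition center_shift k x : nat := (center k <= x) + (center k < x).

(* The letter at position x of the lower-bound word, of length 2 * center k + 1. *)
Definition lower_bit k x := k %| x + center_shift k x.

(* A block of length less than k containing the center behaves as if shifted by 1
   (lower_bit_near_center). *)
Definition block_shift k s m :=
  if s + m <= center k then 0 else if s <= center k then 1 else 2.

Section LowerBound.

Variable k : nat.
Hypothesis k_gt3 : 3 < k.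

Local Notation c := (center k).
Local Notation bit := (lower_bit k).

Let k_gt0 : 0 < k. Proof. by apply: ltn_trans k_gt3. Qed.

Lemma center_succ : c.+1 = k * (k - 1).
Proof. by rewrite /center subn1 prednK // muln_gt0 k_gt0 subn_gt0 ltnW // ltnW. Qed.

Lemma center_shift_mono : {homo center_shift k : x y / x <= y}.
Proof. by move=> x y le_xy; rewrite /center_shift; case: ltngtP; case: ltngtP => //=; lia. Qed.

Lemma center_shiftE x : center_shift k x = if x < c then 0 else if x == c then 1 else 2.
Proof. by rewrite /center_shift; case: ltngtP. Qed.

Lemma center_shift_le2 x : center_shift k x <= 2.
Proof. by rewrite center_shiftE; do ?case: ifP. Qed.

Lemma lower_bit_center : bit c.
Proof. by rewrite /lower_bit center_shiftE ltnn eqxx addn1 center_succ dvdn_mulr. Qed.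

Lemma lower_bit_in_window x : exists2 y, x <= y < x + k & bit y.
Proof.
have [/andP[le_xc lt_c] | ] := boolP (x <= c < x + k).
  by exists c; rewrite ?le_xc ?lower_bit_center.
rewrite negb_and -ltnNge -leqNgt => out.
have [d d_def] : exists d, d = if c < x then 2 else 0 by eexists.
have [e lt_ek dvd_e] := exists_dvdn_add (x + d) k_gt0.
exists (x + e); first by rewrite leq_addr ltn_add2l.
rewrite /lower_bit (_ : center_shift k (x + e) = d) 1?addnAC //.
by rewrite center_shiftE d_def; do ?case: ifP; lia.
Qed.

Lemma lower_bit_progression_free x p : 0 < p -> x + (k - 1) * p <= 2 * c ->
  ~ (forall j, j < k -> bit (x + j * p)).
Proof.
move=> p_gt0 le_x ones; pose s j := center_shift k (x + j * p).
have dvd_s j : j < k -> k %| x + j * p + s j by apply: ones.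
have dvd_p : k %| p.
  have step j : j.+1 < k -> s j = s j.+1 -> k %| p.
    move=> lt_jk eq_s; move: (dvd_s _ lt_jk); rewrite -eq_s mulSnr addnA addnAC.
    by rewrite dvdn_addr // dvd_s // ltnW.
  have mono j : s j <= s j.+1.
    by apply: center_shift_mono; rewrite mulSn; lia.
  have : s 0 = s 1 \/ s 1 = s 2 \/ s 2 = s 3.
    by have := mono 0; have := mono 1; have := mono 2; have : s 3 <= 2 := center_shift_le2 _; lia.
  by case=> [/step|[/step|/step]]; apply; lia.
have eq_s : s (k - 1) = s 0.
  have lt_s j : s j < k by apply: leq_ltn_trans (center_shift_le2 _) (ltnW k_gt3).
  have dvd_last : k %| x + s (k - 1).
    have lt_k1 : k - 1 < k by rewrite ltn_subrL k_gt0.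
    by move: (dvd_s _ lt_k1); rewrite addnAC dvdn_addl // dvdn_mull.
  have dvd_0 : k %| x + s 0 by move: (dvd_s 0 k_gt0); rewrite mul0n addn0.
  have : x + s (k - 1) == x + s 0 %[mod k] by rewrite (eqP dvd_last) (eqP dvd_0).
  by rewrite eqn_modDl !modn_small // => /eqP.
have le_kp : k * (k - 1) <= (k - 1) * p by rewrite mulnC leq_mul2l dvdn_leq ?orbT.
by move: eq_s; rewrite /s !center_shiftE; have := center_succ; do ?case: ifP; lia.
Qed.

Lemma lower_power_free a p : 0 < p -> a + k * p <= 2 * c + 1 ->
  ~ (forall i, i + p < k * p -> bit (a + i) = bit (a + i + p)).
Proof.
move=> p_gt0 le_a per.
have per_mod := @periodic_mod _ (fun i => bit (a + i)) p (k * p).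
have {per}per_mod : forall i, i < k * p -> bit (a + i) = bit (a + i %% p).
  by apply: per_mod => i; rewrite addnA; apply: per.
have [y /andP[le_ay lt_y] one_y] := lower_bit_in_window a.
have kp : k * p = (k - 1) * p + p by rewrite -mulSnr subn1 prednK.
have lt_yk : y - a < k * p by rewrite (leq_trans _ (leq_pmulr _ p_gt0)) // ltn_subLR.
set i0 := (y - a) %% p; have lt_i0 : i0 < p by apply: ltn_pmod.
apply: (@lower_bit_progression_free (a + i0) p p_gt0); first by lia.
move=> j lt_jk; rewrite -addnA per_mod; last first.
  have : j * p <= (k - 1) * p by rewrite leq_mul2r; apply/orP; right; lia.
  by lia.
by rewrite (addnC i0) modnMDl modn_small // -per_mod // subnKC.
Qed.

Lemma lower_bit_near_center y : c < y + (k - 1) -> y < c + (k - 1) -> bit y = (k %| y + 1).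
Proof.
move=> lo hi; have cs := center_succ; have km : (k - 1) * k = k * (k - 1) := mulnC _ _.
have win i : i <= 2 -> (k %| y + i) = (y + i == k * (k - 1)).
  by move=> le_i2; rewrite (@dvdn_window _ (k - 1)) km //; lia.
rewrite /lower_bit center_shiftE; case: ltngtP => cmp; rewrite !win //.
all: by apply/eqP/eqP; lia.
Qed.

Lemma lower_bit_block s m i : i < m -> (m < k) || (block_shift k s m != 1) ->
  bit (s + i) = (k %| s + block_shift k s m + i).
Proof.
move=> lt_im; rewrite /block_shift; case: ifP => [le_c _ | nle_c].
  by rewrite /lower_bit center_shiftE ifT ?addn0 //; lia.
case: ifP => [le_sc | lt_cs] /=.
  rewrite orbF => lt_mk; rewrite lower_bit_near_center; first by rewrite addnAC.
    by lia.
  by lia.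
rewrite /lower_bit center_shiftE !ifF; first by rewrite addnAC.
  by apply/negbTE; lia.
by apply/negbTE; lia.
Qed.

Lemma block_shift_index a m t : 0 < m -> a <= c ->
  block_shift k (a + t * m) m = ((c - a) %/ m <= t) + ((c - a) %/ m < t).
Proof.
move=> m_gt0 le_ac; set t0 := (c - a) %/ m.
have lo : t0 * m <= c - a := leq_divM _ _.
have hi : c - a < t0.+1 * m := ltn_ceil _ m_gt0.
rewrite /block_shift; case: (ltngtP t0 t) => [lt_t0t | lt_tt0 | <-] /=.
- have le_tm : t0.+1 * m <= t * m by rewrite leq_mul2r lt_t0t orbT.
  by rewrite !ifF //; apply/negbTE; lia.
- have le_tm : t.+1 * m <= t0 * m by rewrite leq_mul2r lt_tt0 orbT.
  by rewrite ifT //; lia.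
- by rewrite ifF ?ifT //; [lia | apply/negbTE; lia].
Qed.

Lemma lower_bit_blocks_eqmod s s' m :
  (m < k) || (block_shift k s m != 1) -> (m < k) || (block_shift k s' m != 1) ->
  s + block_shift k s m = s' + block_shift k s' m %[mod k] ->
  forall i, i < m -> bit (s + i) = bit (s' + i).
Proof.
move=> rep rep' eq_mod i lt_im.
rewrite (lower_bit_block lt_im rep) (lower_bit_block lt_im rep').
by rewrite /dvdn -modnDml eq_mod modnDml.
Qed.

Lemma lower_antipower_free_short a m : m.+1 < k ->
  exists t t', [/\ t < t', t' < k &
    forall i, i < m -> bit (a + t * m + i) = bit (a + t' * m + i)].
Proof.
move=> lt_mk; have rep s : (m < k) || (block_shift k s m != 1) by rewrite ltnW.
pose E t := a + t * m + block_shift k (a + t * m) m.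
pose gap t := minn ((k - E t %% k) %% k) m.
have [t [t' [lt_tt' lt_t'k eq_gap]]] : exists t t', [/\ t < t', t' < k & gap t = gap t'].
  apply: (@pigeonhole _ (iota 0 m.+1)); first by rewrite size_iota.
  by move=> t _; rewrite mem_iota /gap; lia.
exists t, t'; split=> // i lt_im.
rewrite !(lower_bit_block lt_im (rep _)) -/(E t) -/(E t') !dvdn_add_ltE; last 2 first.
- by apply: ltn_trans lt_mk; apply: ltn_trans lt_im _.
- by apply: ltn_trans lt_mk; apply: ltn_trans lt_im _.
move: eq_gap; rewrite /gap.
move: ((k - E t %% k) %% k) ((k - E t' %% k) %% k) => X X' eq_min.
by apply/eqP/eqP; lia.
Qed.

Lemma lower_antipower_free_center a : a + k * (k - 1) <= 2 * c + 1 ->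
  exists t t', [/\ t < t', t' < k &
    forall i, i < k - 1 -> bit (a + t * (k - 1) + i) = bit (a + t' * (k - 1) + i)].
Proof.
move=> le_a; have cs := center_succ; set m := k - 1 in le_a cs *.
have m_gt0 : 0 < m by rewrite subn_gt0 (ltn_trans _ k_gt3).
have lt_mk : m < k by rewrite ltn_subrL k_gt0.
have le_ac : a <= c by lia.
set t0 := (c - a) %/ m.
have lt_t0k : t0 < k by rewrite -(ltn_pmul2r m_gt0); have := leq_divM (c - a) m; lia.
have [t [lt_tk step]] :
    exists t, t.+1 < k /\ (t0 <= t.+1) + (t0 < t.+1) = ((t0 <= t) + (t0 < t)).+1.
  case: (ltnP t0.+1 k) => [lt_t0 | le_t0]; [exists t0 | exists t0.-1]; lia.
exists t, t.+1; split=> //; apply: lower_bit_blocks_eqmod; rewrite ?lt_mk //.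
rewrite !block_shift_index // step mulSnr.
by rewrite (_ : a + (t * m + m) + _ = a + t * m + ((t0 <= t) + (t0 < t)) + k) ?modnDr //; lia.
Qed.

Lemma lower_antipower_free_long a m : k <= m -> a + k * m <= 2 * c + 1 ->
  exists t t', [/\ t < t', t' < k &
    forall i, i < m -> bit (a + t * m + i) = bit (a + t' * m + i)].
Proof.
move=> le_km le_a; have m_gt0 : 0 < m by apply: leq_trans le_km.
have cs := center_succ.
have kk : k * (k - 1) = (k - 1) * k := mulnC _ _.
have km : k * m = (k - 1) * m + m by rewrite -mulSnr subn1 prednK.
have le_kk : (k - 1) * k <= (k - 1) * m by rewrite leq_mul2l le_km orbT.
have le_ac : a <= c by lia.
set t0 := (c - a) %/ m.
have lo : t0 * m <= c - a := leq_divM _ _.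
have hi : c - a < t0.+1 * m := ltn_ceil _ m_gt0.
have t0_gt0 : 0 < t0 by move: hi; rewrite lt0n; case: eqP => [-> | //]; rewrite mul1n; lia.
have le_t0 : t0 + 2 <= k.
  rewrite leqNgt; apply/negP => lt_t0; have : (k - 1) * m <= t0 * m by rewrite leq_mul2r; lia.
  by lia.
have le_g : m - k + 3 <= k.
  have : k * m < k * (2 * (k - 1)) by rewrite mulnCA; lia.
  by rewrite ltn_pmul2l //; lia.
have [t [t' [lt_tt' lt_t'k ne_t ne_t' eq_mod]]] :=
  shifted_residue_clash_exists k_gt3 le_g t0_gt0 le_t0.
have shift u : u != t0 -> block_shift k (a + u * m) m = 2 * (t0 < u).
  by move=> ne_u; rewrite block_shift_index // leq_eqVlt eq_sym (negbTE ne_u) addnn -mul2n.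
have E u : a + u * m + 2 * (t0 < u) = u * k + (a + (u * (m - k) + 2 * (t0 < u))).
  by rewrite -{1}(subnKC le_km) mulnDr; lia.
exists t, t'; split=> //; apply: lower_bit_blocks_eqmod; rewrite ?shift //;
  try by rewrite orbC; case: (t0 < _).
by rewrite (E t) (E t') !modnMDl -modnDmr eq_mod modnDmr.
Qed.

Lemma lower_antipower_free a m : a + k * m <= 2 * c + 1 ->
  exists t t', [/\ t < t', t' < k &
    forall i, i < m -> bit (a + t * m + i) = bit (a + t' * m + i)].
Proof.
move=> le_a; case: (ltnP m.+1 k) => [lt_mk | le_km]; first exact: lower_antipower_free_short.
case: (ltnP m k) => [lt_mk | le_km']; last exact: lower_antipower_free_long.
have m_def : m = k - 1 by lia.
by rewrite m_def in le_a *; apply: lower_antipower_free_center.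
Qed.

Lemma lower_word_free (T : eqType) (x0 x1 : T) : x0 != x1 ->
  forall f, infix f (mkseq (fun x => if bit x then x1 else x0) (2 * c + 1)) ->
  ~ (is_kpower k f \/ is_kantipower k f).
Proof.
move=> neq_x f; set w := mkseq _ _ => inf_f.
have size_w : size w = 2 * c + 1 by rewrite size_mkseq.
have code_inj : injective (fun b : bool => if b then x1 else x0).
  by case; case=> // eq_x; rewrite eq_x eqxx in neq_x.
have nth_w y : y < 2 * c + 1 -> nth x0 w y = if bit y then x1 else x0.
  by move=> lt_y; rewrite nth_mkseq.
case=> [pow | anti].
  have [a [p [p_gt0 le_a per]]] := kpower_factor_periodic x0 k_gt0 inf_f pow.
  rewrite size_w in le_a; apply: (lower_power_free p_gt0 le_a) => i lt_i.
  by apply: code_inj; rewrite -!nth_w ?per //; lia.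
have [a [m [le_a distinct]]] := kantipower_factor_blocks x0 inf_f anti.
rewrite size_w in le_a; have [t [t' [lt_tt' lt_t'k same]]] := lower_antipower_free le_a.
apply: (distinct t t'); first by rewrite lt_tt'.
move=> i lt_im; have lt_blk u : u < k -> a + u * m + i < 2 * c + 1.
  move=> lt_uk; have : u.+1 * m <= k * m by rewrite leq_mul2r lt_uk orbT.
  by rewrite mulSn; lia.
have lt_tk := ltn_trans lt_tt' lt_t'k.
by rewrite !nth_w ?lt_blk // same.
Qed.

End LowerBound.

Lemma forces_upper_bound alpha k : 1 < k ->
  forces_power_or_antipower alpha k ((k ^ 3 - k ^ 2 + k) * 'C(k, 2)).
Proof.
move=> k_gt1 w size_w; apply: NNPP => no_factor.
suff : size w < size w by rewrite ltnn.
rewrite {2}size_w; apply: free_size_lt k_gt1 _ => f inf_f pow.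
by apply: no_factor; exists f.
Qed.

Lemma not_forces_lower_bound alpha k M : 1 < alpha -> 3 < k -> M <= 2 * center k + 1 ->
  ~ forces_power_or_antipower alpha k M.
Proof.
move=> alpha_gt1 k_gt3 le_M forces.
pose x0 : 'I_alpha := Ordinal (ltnW alpha_gt1); pose x1 : 'I_alpha := Ordinal alpha_gt1.
set w := mkseq (fun x => if lower_bit k x then x1 else x0) (2 * center k + 1).
have le_Mw : M <= size w by rewrite size_mkseq.
have [f [inf_f pow]] := forces (take M w) (size_takel le_Mw).
exact: (lower_word_free k_gt3 (_ : x0 != x1) (infix_trans inf_f (infix_take w M)) pow).
Qed.

Theorem theorem5p1 (alpha k : nat) : 2 <= alpha -> 3 < k ->
  exists N, is_N_alpha_kk alpha k N /\
    2 * k ^ 2 - 2 * k <= N <= (k ^ 3 - k ^ 2 + k) * 'C(k, 2).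
Proof.
move=> alpha_ge2 k_gt3; set U := (k ^ 3 - k ^ 2 + k) * 'C(k, 2).
have U_gt0 : 0 < U by rewrite muln_gt0 bin_gt0 addn_gt0; lia.
have forces_U := @forces_upper_bound alpha k (ltnW (ltnW k_gt3)).
pose P N := 0 < N /\ forces_power_or_antipower alpha k N.
have [N [[[N_gt0 forces_N] least] _]] := Wf_nat.dec_inh_nat_subset_has_unique_least_element P
  (fun N => classic (P N)) (ex_intro P U (conj U_gt0 forces_U)).
have le_least M : P M -> N <= M by move/least/leP.
exists N; split.
  split=> //; split=> // M M_gt0 lt_MN forces_M.
  by move: (le_least M (conj M_gt0 forces_M)); rewrite leqNgt lt_MN.
apply/andP; split; last exact: le_least (conj U_gt0 forces_U).
rewrite leqNgt; apply/negP => lt_N; apply: (not_forces_lower_bound alpha_ge2 k_gt3 _ forces_N).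
by move: lt_N; rewrite /center mulnBr muln1 expnS expn1; lia.
Qed.
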